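(* Let $d\in\mathbb{N}$ and let $\mathcal{P}$ be a unit hypercube partition of $\mathbb{R}^{d}$. Then there exists $\vec{p}\in\mathbb{R}^{d}$ such that $|\mathcal{N}_{\overline{0}}(\vec{p})|\geq d+1$. Furthermore, $\mathcal{P}$ contains a $(d+1)$-clique.
   Context: A unit hypercube is a set $\vec{a}+[0,1)^d$ with $\vec{a}\in\mathbb{R}^d$; a unit hypercube partition of $\mathbb{R}^d$ is a partition all of whose members are unit hypercubes. For a partition $\mathcal{P}$ of $\mathbb{R}^d$ and $\vec{p}\in\mathbb{R}^d$, $\mathcal{N}_{\overline{0}}(\vec{p})=\{X\in\mathcal{P}:\vec{p}\in\overline{X}\}$, where $\overline{X}$ is the closure (in the usual topology). Two members $X,Y\in\mathcal{P}$ are adjacent if $\overline{X}\cap\overline{Y}\neq\emptyset$; an $n$-clique in $\mathcal{P}$ is a set of $n$ distinct members that are pairwise adjacent. *)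

(* points of R^d are row vectors 'rV[R]_d, R : realType,
   with the usual (product) topology from mathcomp-analysis. *)
From HB Require Import structures.
From mathcomp Require Import all_boot all_order all_algebra.
From mathcomp Require Import all_classical all_reals all_analysis.
Set Implicit Arguments. Unset Strict Implicit. Unset Printing Implicit Defensive.
Import Order.TTheory GRing.Theory Num.Theory.
Import numFieldNormedType.Exports.
Local Open Scope classical_set_scope.
Local Open Scope ring_scope.

Definition unit_cube (R : realType) (d : nat) (a : 'rV[R]_d) : set 'rV[R]_d :=
  [set x | forall i : 'I_d, a ord0 i <= x ord0 i /\ x ord0 i < a ord0 i + 1].

Definition is_unit_cube (R : realType) (d : nat) (X : set 'rV[R]_d) : Prop :=
  exists a : 'rV[R]_d, X = unit_cube a.

Definition is_partition (T : Type) (P : set (set T)) : Prop :=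
  (forall X, P X -> X !=set0) /\
  (forall X Y, P X -> P Y -> X <> Y -> X `&` Y = set0) /\
  (forall x : T, exists X, P X /\ X x).

Definition unit_cube_partition (R : realType) (d : nat) (P : set (set 'rV[R]_d)) : Prop :=
  is_partition P /\ (forall X, P X -> is_unit_cube X).

Definition N0 (R : realType) (d : nat) (P : set (set 'rV[R]_d)) (p : 'rV[R]_d)
  : set (set 'rV[R]_d) :=
  [set X | P X /\ closure X p].

Definition adjacent (R : realType) (d : nat) (X Y : set 'rV[R]_d) : Prop :=
  closure X `&` closure Y !=set0.

Definition has_clique (R : realType) (d : nat) (P : set (set 'rV[R]_d)) (n : nat) : Prop :=
  exists f : 'I_n -> set 'rV[R]_d,
    injective f /\ (forall i, P (f i)) /\
    (forall i j, i != j -> adjacent (f i) (f j)).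

From HB Require Import structures.
From mathcomp Require Import all_boot all_order all_algebra.
From mathcomp Require Import all_classical all_reals all_analysis.
From mathcomp Require Import lra.
Import Order.TTheory GRing.Theory Num.Theory.
Import numFieldNormedType.Exports.
Local Open Scope classical_set_scope.
Local Open Scope ring_scope.
Set Implicit Arguments. Unset Strict Implicit.

(* Let a + [0,1)^d be a cube of the partition. For each direction k, the cube
   containing a - e_k/2 has k-th corner coordinate exactly a_k - 1: were it
   larger, that cube would meet the cube at a; were it smaller, the cube
   covering the point of the line a + R e_k just above it could be flush
   neither with it nor with the cube at a. So these d cubes and the cube at a
   are pairwise distinct, and the vertex a lies in the closure of all d+1 of
   them, which makes them a clique. *)

Lemma closure_unit_cube (R : realType) (d : nat) (b p : 'rV[R]_d) :
  (forall j, b ord0 j <= p ord0 j <= b ord0 j + 1) ->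
  closure (unit_cube b) p.
Proof.
move=> bp B /nbhs_ballP [e /= e_gt0 ballB].
pose del := Num.min (e / 2) (1 / 2).
have del_gt0 : 0 < del by rewrite lt_min; apply/andP; split; lra.
have del_le1 : del <= e / 2 by rewrite ge_min lexx.
have del_le2 : del <= 1 / 2 by rewrite ge_min lexx orbT.
pose y : 'rV[R]_d := \row_j Num.max (b ord0 j) (p ord0 j - del).
have yE j : y ord0 j = Num.max (b ord0 j) (p ord0 j - del) by rewrite mxE.
exists y; split.
  move=> j; rewrite yE; have /andP[? ?] := bp j.
  by have [?|?] := leP (b ord0 j) (p ord0 j - del); split; lra.
apply: ballB; split => // i j; rewrite /ball /= (ord1 i) yE.
have /andP[? ?] := bp j.
by have [?|?] := leP (b ord0 j) (p ord0 j - del); rewrite ger0_norm; lra.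
Qed.

Lemma unit_cube_corner (R : realType) (d : nat) (a : 'rV[R]_d) : unit_cube a a.
Proof. by move=> j; split => //; lra. Qed.

Lemma unit_cube_inj (R : realType) (d : nat) : injective (@unit_cube R d).
Proof.
move=> a b ab; apply/matrixP => i j; rewrite (ord1 i).
have := unit_cube_corner a; rewrite ab => /(_ j)[ba _].
have := unit_cube_corner b; rewrite -ab => /(_ j)[ab' _].
by apply/le_anti; rewrite ab' ba.
Qed.

Definition row_set (R : realType) (d : nat) (a : 'rV[R]_d) (k : 'I_d) (v : R) :
  'rV[R]_d := \row_j (if j == k then v else a ord0 j).

Lemma unit_cube_row_setP (R : realType) (d : nat) (a b : 'rV[R]_d) k v :
  unit_cube b (row_set a k v) <->
  (b ord0 k <= v < b ord0 k + 1) /\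
  (forall j, j != k -> b ord0 j <= a ord0 j /\ a ord0 j < b ord0 j + 1).
Proof.
split => [inb|[/andP[? ?] ab] j].
  split; first by have := inb k; rewrite mxE eqxx => -[-> ->].
  by move=> j jk; have := inb j; rewrite mxE (negbTE jk).
by rewrite mxE; case: eqVneq => [->|]; [split | exact: ab].
Qed.

Lemma unit_cube_row_set_self (R : realType) (d : nat) (a : 'rV[R]_d) k v :
  a ord0 k <= v < a ord0 k + 1 -> unit_cube a (row_set a k v).
Proof. by move=> av; apply/unit_cube_row_setP; split => // j _; split => //; lra. Qed.

Lemma unit_cube_row_set_move (R : realType) (d : nat) (a b : 'rV[R]_d) k s t :
  unit_cube b (row_set a k s) -> b ord0 k <= t < b ord0 k + 1 ->
  unit_cube b (row_set a k t).
Proof.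
by move=> /unit_cube_row_setP[_ ab] bt; apply/(unit_cube_row_setP a b k t); split.
Qed.

Lemma clique_of_common_point (R : realType) (d n : nat)
    (P : set (set 'rV[R]_d)) (p : 'rV[R]_d) (f : 'I_n -> set 'rV[R]_d) :
  injective f -> (forall i, N0 P p (f i)) -> has_clique P n.
Proof.
move=> f_inj fp; exists f; split => //; split => [i|i j _]; first by case: (fp i).
by exists p; split; [case: (fp i) | case: (fp j)].
Qed.

Section UnitCubePartition.
Variables (R : realType) (d : nat) (P : set (set 'rV[R]_d)).
Hypothesis P_part : unit_cube_partition P.

Lemma partition_cover (x : 'rV[R]_d) : exists b, P (unit_cube b) /\ unit_cube b x.
Proof.
have [[_ [_ cover]] cubes] := P_part.
have [X [PX Xx]] := cover x; have [b Xb] := cubes X PX.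
by exists b; rewrite -Xb.
Qed.

Lemma partition_cube_eq (a b x : 'rV[R]_d) :
  P (unit_cube a) -> P (unit_cube b) -> unit_cube a x -> unit_cube b x -> a = b.
Proof.
have [[_ [disj _]] _] := P_part.
move=> Pa Pb ax bx; apply: unit_cube_inj; apply: contrapT => ab.
by have := disj _ _ Pa Pb ab; rewrite -subset0; apply; split.
Qed.

Lemma partition_line_eq (a b c : 'rV[R]_d) k s t u :
  P (unit_cube b) -> P (unit_cube c) ->
  unit_cube b (row_set a k s) -> unit_cube c (row_set a k t) ->
  b ord0 k <= u < b ord0 k + 1 -> c ord0 k <= u < c ord0 k + 1 -> b = c.
Proof.
move=> Pb Pc bs ct bu cu.
by apply: (partition_cube_eq (x := row_set a k u)) => //;
  apply: unit_cube_row_set_move; eassumption.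
Qed.

Lemma lower_neighbour_corner (a b : 'rV[R]_d) k :
  P (unit_cube a) -> P (unit_cube b) ->
  unit_cube b (row_set a k (a ord0 k - 1 / 2)) -> b ord0 k = a ord0 k - 1.
Proof.
move=> Pa Pb bv; have /unit_cube_row_setP[/andP[? ?] _] := bv.
have a_self : unit_cube a (row_set a k (a ord0 k)).
  by apply: unit_cube_row_set_self; apply/andP; split; lra.
have [b_gt|b_lt|] := ltgtP (b ord0 k + 1) (a ord0 k); last lra.
  have [z [Pz zc]] := partition_cover (row_set a k (b ord0 k + 1)).
  have /unit_cube_row_setP[/andP[? ?] _] := zc.
  have [z_lt|z_ge] := ltP (z ord0 k) (b ord0 k + 1).
    pose u := Num.max (b ord0 k) (z ord0 k).
    have [? ?] : b ord0 k <= u /\ z ord0 k <= u by split; rewrite le_max lexx ?orbT.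
    have ? : u < b ord0 k + 1 by rewrite gt_max; apply/andP; split; lra.
    have bz : b = z.
      apply: (partition_line_eq (u := u) Pb Pz bv zc).
        by apply/andP; split; lra.
      by apply/andP; split; lra.
    by subst z; lra.
  have az : a = z.
    apply: (partition_line_eq (u := a ord0 k) Pa Pz a_self zc).
      by apply/andP; split; lra.
    by apply/andP; split; lra.
  by subst z; lra.
have ab : a = b.
  apply: (partition_line_eq (u := a ord0 k) Pa Pb a_self bv).
    by apply/andP; split; lra.
  by apply/andP; split; lra.
by subst b; lra.
Qed.

Lemma partition_corner_neighbours (a : 'rV[R]_d) :
  P (unit_cube a) ->
  exists f : 'I_d.+1 -> set 'rV[R]_d, injective f /\ forall i, N0 P a (f i).
Proof.
move=> Pa.
have /choice[g Hg] : forall k : 'I_d,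
    exists b, P (unit_cube b) /\ unit_cube b (row_set a k (a ord0 k - 1 / 2)).
  by move=> k; exact: partition_cover.
have gk k : g k ord0 k = a ord0 k - 1.
  by apply: lower_neighbour_corner => //; case: (Hg k).
have gj k j : j != k -> g k ord0 j <= a ord0 j /\ a ord0 j < g k ord0 j + 1.
  by case: (Hg k) => _ /unit_cube_row_setP[_]; apply.
pose corner i := if unlift ord0 i is Some k then g k else a.
have corner_inj : injective corner.
  rewrite /corner => i i'.
  case: (unliftP ord0 i) => [k ->|->]; case: (unliftP ord0 i') => [l ->|->] //.
  - move=> gkl; congr lift; case: (eqVneq k l) => // kl.
    exfalso; have [_ ?] := gj l k kl; have := gk k; rewrite gkl; lra.
  - move=> ga; exfalso; have := gk k; rewrite ga; lra.
  - move=> ag; exfalso; have := gk l; rewrite -ag; lra.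
exists (@unit_cube R d \o corner); split.
  exact: inj_comp (@unit_cube_inj R d) corner_inj.
move=> i; rewrite /N0 /= /corner; case: unliftP => [k _|_]; split => //.
- by case: (Hg k).
- apply: closure_unit_cube => j; case: (eqVneq j k) => [->|jk].
    by rewrite gk; apply/andP; split; lra.
  by have [? ?] := gj k j jk; apply/andP; split; lra.
- by apply: closure_unit_cube => j; apply/andP; split; lra.
Qed.

End UnitCubePartition.

Theorem mainTheorem2 (R : realType) (d : nat) (P : set (set 'rV[R]_d)) :
  unit_cube_partition P ->
  (exists p : 'rV[R]_d,
     exists f : 'I_d.+1 -> set 'rV[R]_d,
       injective f /\ (forall i, N0 P p (f i))) /\
  has_clique P d.+1.
Proof.
move=> P_part.
have [a [Pa _]] := partition_cover P_part 0.
have [f [f_inj fa]] := partition_corner_neighbours P_part Pa.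
by split; [exists a, f | exact: clique_of_common_point f_inj fa].
Qed.
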